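(* Let $G=(V,E)$ be a finite graph (parallel edges and loops allowed) and $e\neq f$ edges of $G$, and let $E^{ef}=E\setminus\{e,f\}$. The coefficient of the monomial $\prod_{g\in E^{ef}}x_g$ in $\mathcal{M}_{ef}(1)$ equals the number of paracels $F\subseteq E^{ef}$ of $G$.
   Context: Let $\{x_g : g\in E\}$ be variables. For $F\subseteq E$, $\mathbf{x}^F=\prod_{g\in F}x_g$ and $k(F)$ is the number of connected components of $(V,F)$. For $A,B\subseteq E$, $\mathcal{T}_A^B=\sum_{F\subseteq E:\,A\subseteq F,\,F\cap B=\varnothing}\mathbf{x}^F q^{k(F)}$; $\mathcal{T}_e^f=\mathcal{T}_{\{e\}}^{\{f\}}$, $\mathcal{T}_f^e=\mathcal{T}_{\{f\}}^{\{e\}}$, $\mathcal{T}_{ef}=\mathcal{T}_{\{e,f\}}^{\varnothing}$, $\mathcal{T}^{ef}=\mathcal{T}_{\varnothing}^{\{e,f\}}$, and $\mathcal{M}_{ef}(q)=(\mathcal{T}_e^f\mathcal{T}_f^e-\mathcal{T}_{ef}\mathcal{T}^{ef})/(x_ex_f(1-q))$, which is a polynomial; $\mathcal{M}_{ef}(1)$ is its value at $q=1$. A subset $F\subseteq E^{ef}$ is a paracel if $e$ and $f$ both join the same two distinct connected components of $(V,F)$; equivalently $(V,F+e)$ and $(V,F+f)$ have the same connected components and $k(F+e)=k(F+f)=k(F)-1$. *)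

From HB Require Import structures.
From mathcomp Require Import all_boot all_order all_algebra.
From mathcomp Require Import mpoly.
Set Implicit Arguments. Unset Strict Implicit. Unset Printing Implicit Defensive.
Import GRing.Theory.
Local Open Scope ring_scope.

(* A finite multigraph G = (V,E): E = 'I_m, edge g has endpoints ends g
   (parallel edges and loops allowed). *)

Definition adjF (V : finType) (m : nat) (ends : 'I_m -> V * V)
  (F : {set 'I_m}) : rel V :=
  fun u v => [exists g in F, (ends g == (u, v)) || (ends g == (v, u))].

Definition kcomp (V : finType) (m : nat) (ends : 'I_m -> V * V)
  (F : {set 'I_m}) : nat :=
  #|[set [set y | connect (adjF ends F) x y] | x : V]|.

Definition xF (m : nat) (F : {set 'I_m}) : {mpoly int[m]} :=
  \prod_(g in F) 'X_g.

(* T_A^B as a polynomial in q with coefficients in Z[x_g : g in E] *)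
Definition Tpoly (V : finType) (m : nat) (ends : 'I_m -> V * V)
  (A B : {set 'I_m}) : {poly {mpoly int[m]}} :=
  \sum_(F : {set 'I_m} | (A \subset F) && [disjoint F & B])
     (xF F)%:P * 'X^(kcomp ends F).

Definition is_Mef (V : finType) (m : nat) (ends : 'I_m -> V * V)
  (e f : 'I_m) (M : {poly {mpoly int[m]}}) : Prop :=
  (xF [set e; f])%:P * (1 - 'X) * M =
    Tpoly ends [set e] [set f] * Tpoly ends [set f] [set e]
    - Tpoly ends [set e; f] set0 * Tpoly ends set0 [set e; f].

Definition mon_ef (m : nat) (e f : 'I_m) : 'X_{1..m} :=
  [multinom (if (i != e) && (i != f) then 1%N else 0%N) | i < m].

Definition paracel (V : finType) (m : nat) (ends : 'I_m -> V * V)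
  (e f : 'I_m) (F : {set 'I_m}) : bool :=
  let c := connect (adjF ends F) in
  let a := (ends e).1 in let b := (ends e).2 in
  let a' := (ends f).1 in let b' := (ends f).2 in
  [&& F \subset ~: [set e; f], ~~ c a b &
      (c a a' && c b b') || (c a b' && c b a')].

From HB Require Import structures.
From mathcomp Require Import all_boot all_order all_algebra.
From mathcomp Require Import mpoly.
From mathcomp Require Import zify ring.
Import GRing.Theory.

(* Splitting every T into a sum over the part S of F lying in E^{ef} gives
   M_ef(q) explicitly as the sum over S, S' in E^{ef} of
   x^S x^S' ([k(S+e+f) + k(S')]_q - [k(S+e) + k(S'+f)]_q), with the
   q-integers [n]_q = 1 + q + ... + q^(n-1); it is the only solution since
   x_e x_f (1 - q) is not a zero divisor.  At q = 1 the monomial x^{E^{ef}}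
   only comes from S' = E^{ef} minus S, and reindexing by complements turns its
   coefficient into the sum over S of k(S) - k(S+e) - k(S+f) + k(S+e+f).
   Adding an edge merges the two classes of its ends, so k drops by one exactly
   when the edge joins two components; hence the summand is 1 exactly when e
   joins two components of S that f also joins, i.e. when S is a paracel. *)

Definition eqclass {T : finType} (r : rel T) (x : T) : {set T} := [set y | r x y].

Definition eqclasses {T : finType} (r : rel T) : {set {set T}} :=
  [set eqclass r x | x : T].

Lemma eq_eqclasses {T : finType} {r1 r2 : rel T} :
  r1 =2 r2 -> eqclasses r1 = eqclasses r2.
Proof. by move=> r12; apply: eq_imset => x; apply/setP => y; rewrite !inE r12. Qed.

Section MergeClasses.
Context {T : finType} (r : rel T).
Hypothesis r_refl : reflexive r.
Hypothesis r_sym : ssrbool.symmetric r.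
Hypothesis r_trans : transitive r.

Let r_ltrans : left_transitive r := sym_left_transitive r_sym r_trans.

Lemma eqclass_eqE x y : (eqclass r x == eqclass r y) = r x y.
Proof.
apply/eqP/idP => [/setP/(_ y) | rxy]; first by rewrite !inE r_refl => ->.
by apply/setP => z; rewrite !inE (r_ltrans _ _ rxy).
Qed.

Variables a b : T.

Definition merge_rel : rel T :=
  fun x y => r x y || (r x a || r x b) && (r y a || r y b).

Lemma eqclass_merge_rel x :
  eqclass merge_rel x =
  if r x a || r x b then eqclass r a :|: eqclass r b else eqclass r x.
Proof.
apply/setP => y; rewrite /eqclass /merge_rel.
case: ifP => [near_x | _]; rewrite !inE ?orbF //=.
by rewrite (r_sym a y) (r_sym b y) orb_idl // => rxy; rewrite -!(r_ltrans _ _ rxy).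
Qed.

Lemma merge_rel_refl : reflexive merge_rel.
Proof. by move=> x; rewrite /merge_rel r_refl. Qed.

Lemma merge_rel_trans : transitive merge_rel.
Proof.
move=> y x z; rewrite /merge_rel.
have near_r u v : r u v -> (r u a || r u b) = (r v a || r v b).
  by move=> ruv; rewrite !(r_ltrans _ _ ruv).
case/orP=> [rxy | /andP[near_x near_y]] /orP[ryz | /andP[near_y' near_z]].
- by rewrite (r_trans _ _ _ rxy ryz).
- by rewrite (near_r _ _ rxy) near_y' near_z orbT.
- by rewrite -(near_r _ _ ryz) near_x near_y orbT.
- by rewrite near_x near_z orbT.
Qed.

Lemma merge_rel_sep x y : ~~ r x y ->
  merge_rel x y = (r x a && r y b) || (r x b && r y a).
Proof.
move=> /negbTE nrxy; rewrite /merge_rel nrxy /=.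
have not_both c : r x c && r y c = false.
  by apply: contraFF nrxy => /andP[rxc ryc]; apply: (r_trans c _ _ rxc); rewrite r_sym.
by rewrite andb_orl !andb_orr !not_both orbF.
Qed.

Lemma card_eqclasses_merge_rel :
  #|eqclasses r| = #|eqclasses merge_rel| + ~~ r a b.
Proof.
have classes_merge : eqclasses merge_rel =
    (eqclass r a :|: eqclass r b) |: (eqclasses r :\: [set eqclass r a; eqclass r b]).
  apply/setP => C; rewrite in_setU1; apply/imsetP/idP => [[x _ ->] | ].
    rewrite eqclass_merge_rel; case: ifPn => [_ | far_x]; first by rewrite eqxx.
    by rewrite !inE !eqclass_eqE (negbTE far_x) imset_f ?orbT.
  rewrite !inE => /orP[/eqP -> | /andP[not_ab /imsetP[x _ C_x]]].
    by exists a; rewrite // eqclass_merge_rel r_refl.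
  rewrite C_x !eqclass_eqE in not_ab *.
  by exists x; rewrite // eqclass_merge_rel (negbTE not_ab).
have merged_new :
    eqclass r a :|: eqclass r b \notin eqclasses r :\: [set eqclass r a; eqclass r b].
  apply/negP; rewrite !inE => /andP[not_ab /imsetP[x _ C_x]].
  have : a \in eqclass r a :|: eqclass r b by rewrite !inE r_refl.
  by rewrite C_x inE => rxa; rewrite C_x !eqclass_eqE rxa in not_ab.
have old_ab : [set eqclass r a; eqclass r b] \subset eqclasses r.
  by apply/subsetP => C; rewrite !inE => /orP[] /eqP ->; apply: imset_f.
have := subset_leq_card old_ab; rewrite cards2 eqclass_eqE.
rewrite classes_merge cardsU1 merged_new cardsD (setIidPr old_ab) cards2 eqclass_eqE.
(* the two occurrences of #|eqclasses r| differ by a hidden coercion *)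
by case: (r a b); move: #|eqclasses r| => n /=; lia.
Qed.
End MergeClasses.

Lemma connect_minimal {T : finType} (e R : rel T) :
  reflexive R -> transitive R -> subrel e R -> subrel (connect e) R.
Proof.
move=> R_refl R_trans eR x y /connectP[p]; elim: p x => [x _ -> // | z p IHp x] /=.
by case/andP=> /eR Rxz /IHp Rzy /Rzy; apply: R_trans.
Qed.

Section Connectivity.
Context {V : finType} {m : nat} (ends : 'I_m -> V * V).

Lemma adjF_sym (F : {set 'I_m}) : ssrbool.symmetric (adjF ends F).
Proof.
by move=> u v; apply/existsP/existsP => -[g /andP[gF ends_g]];
  exists g; rewrite gF orbC.
Qed.

Lemma connect_adjF_sym (F : {set 'I_m}) : connect_sym (adjF ends F).
Proof. exact/sym_connect_sym/adjF_sym. Qed.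

Lemma connect_adjFS (F F' : {set 'I_m}) : F \subset F' ->
  subrel (connect (adjF ends F)) (connect (adjF ends F')).
Proof.
move=> /subsetP sFF'; apply: connect_sub => u v /existsP[g /andP[gF ends_g]].
by apply: connect1; apply/existsP; exists g; rewrite sFF'.
Qed.

Lemma connect_adjF_setU1 (F : {set 'I_m}) (g : 'I_m) :
  connect (adjF ends (g |: F)) =2
  merge_rel (connect (adjF ends F)) (ends g).1 (ends g).2.
Proof.
set c := connect (adjF ends F); set c' := connect (adjF ends (g |: F)).
have c_refl : reflexive c by move=> ?; apply: connect0.
have c_trans : transitive c by apply: connect_trans.
move=> x y; apply/idP/idP.
  apply: connect_minimal x y.
  - exact: merge_rel_refl.
  - exact: (@merge_rel_trans _ c (connect_adjF_sym F) c_trans).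
  move=> u v /existsP[h /andP[]]; rewrite in_setU1 => /orP[/eqP -> | hF] ends_h.
    by case/orP: ends_h => /eqP ends_g; rewrite /merge_rel ends_g /= !c_refl !orbT.
  by apply/orP; left; apply: connect1; apply/existsP; exists h; rewrite hF.
have cc' : subrel c c' by apply: connect_adjFS; rewrite subsetUr.
have c'_ab : c' (ends g).1 (ends g).2.
  by apply: connect1; apply/existsP; exists g; rewrite setU11 -surjective_pairing eqxx.
have near_c' z : c z (ends g).1 || c z (ends g).2 -> c' z (ends g).1.
  case/orP=> /cc' // c'_zb; apply: connect_trans c'_zb _.
  by rewrite connect_adjF_sym.
case/orP=> [/cc' // | /andP[/near_c' c'_xa /near_c' c'_ya]].
by apply: connect_trans c'_xa _; rewrite connect_adjF_sym.
Qed.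

Lemma kcompE (F : {set 'I_m}) : kcomp ends F = #|eqclasses (connect (adjF ends F))|.
Proof. by []. Qed.

Lemma kcomp_setU1 (F : {set 'I_m}) (g : 'I_m) :
  kcomp ends F =
  kcomp ends (g |: F) + ~~ connect (adjF ends F) (ends g).1 (ends g).2.
Proof.
rewrite !kcompE (eq_eqclasses (connect_adjF_setU1 F g)).
apply: card_eqclasses_merge_rel.
- exact: connect0.
- exact: connect_adjF_sym.
- exact: connect_trans.
Qed.

Lemma kcomp_paracel {e f : 'I_m} {S : {set 'I_m}} : S \subset ~: [set e; f] ->
  kcomp ends S + kcomp ends ([set e; f] :|: S) =
  kcomp ends ([set e] :|: S) + kcomp ends ([set f] :|: S) + paracel ends e f S.
Proof.
move=> sub_S; rewrite -setUA (kcomp_setU1 S e) (kcomp_setU1 (f |: S) e).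
rewrite /paracel sub_S /= connect_adjF_setU1.
set c := connect (adjF ends S).
have [c_ab | nc_ab] := boolP (c (ends e).1 (ends e).2).
  by rewrite /merge_rel c_ab /= !addn0.
rewrite merge_rel_sep //; [|exact: connect_adjF_sym | exact: connect_trans].
by case: (_ || _) => /=; lia.
Qed.

End Connectivity.

Section BigSubsets.
Context {R : Type} {idx : R} (op : Monoid.com_law idx) {T : finType}.

Lemma big_setU_interval {A B : {set T}} (G : {set T} -> R) :
  [disjoint A & B] ->
  \big[op/idx]_(F : {set T} | (A \subset F) && [disjoint F & B]) G F =
  \big[op/idx]_(S : {set T} | S \subset ~: (A :|: B)) G (A :|: S).
Proof.
move=> dAB.
rewrite (reindex_onto (setU A) (fun F : {set T} => F :\: A)) => [|F /andP[sAF _]].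
  apply: eq_bigl => S; rewrite subsetUl /= !disjoints_subset subUset.
  rewrite -disjoints_subset dAB /= setDUl setDv set0U setCU subsetI andbC.
  by congr (_ && _); rewrite -disjoints_subset; apply/eqP/setDidPl.
by rewrite setDE setUIr setUCr setIT; apply/setUidPr.
Qed.

Lemma big_subset_setD (E : {set T}) (G : {set T} -> R) :
  \big[op/idx]_(S : {set T} | S \subset E) G (E :\: S) =
  \big[op/idx]_(S : {set T} | S \subset E) G S.
Proof.
have setDK (S : {set T}) : S \subset E -> E :\: (E :\: S) = S.
  by move=> sSE; rewrite setDDr setDv set0U; apply/setIidPr.
rewrite [RHS](reindex_onto (setD E) (setD E)) => [|S /setDK //].
apply: eq_bigl => S; rewrite subsetDl /=.
by apply/idP/eqP => [/setDK | <-] //; apply: subsetDl.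
Qed.

End BigSubsets.

Local Open Scope ring_scope.

Definition qint {R : nzRingType} (n : nat) : {poly R} := \sum_(i < n) 'X^i.

Lemma mul_1subX_qintB {R : nzRingType} (a b : nat) :
  (1 - 'X) * (qint b - qint a) = 'X^a - 'X^b :> {poly R}.
Proof.
have mul_qint n : (1 - 'X) * qint n = 1 - 'X^n :> {poly R}.
  by rewrite -opprB mulNr -subrX1 opprB.
by rewrite mulrBr !mul_qint opprB addrC addrA subrK.
Qed.

Lemma horner_qint1 {R : nzRingType} (n : nat) : (qint n).[1] = n%:R :> R.
Proof.
rewrite horner_sum (eq_bigr (fun _ => 1)) => [|i _]; last by rewrite hornerXn expr1n.
by rewrite sumr_const card_ord.
Qed.

Section Monomials.
Context {m : nat}.

Definition mnm_of (A : {set 'I_m}) : 'X_{1..m} := (\sum_(g in A) U_(g))%MM.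

Lemma mnm_ofE (A : {set 'I_m}) (i : 'I_m) : mnm_of A i = (i \in A).
Proof.
rewrite mnm_sumE; have [iA | niA] := boolP (i \in A).
  by rewrite (bigD1 i) //= mnm1E eqxx big1 // => g /andP[_ /negbTE gi]; rewrite mnm1E gi.
by rewrite big1 // => g gA; rewrite mnm1E; case: eqP => // gi; rewrite -gi gA in niA.
Qed.

Lemma xF_mnm_of (A : {set 'I_m}) : xF A = 'X_[mnm_of A].
Proof. exact: mprodXE. Qed.

Lemma xF_neq0 (A : {set 'I_m}) : xF A != 0.
Proof.
rewrite xF_mnm_of; apply/eqP => /(congr1 (mcoeff (mnm_of A))).
by rewrite mcoeffX eqxx mcoeff0 => /eqP; rewrite oner_eq0.
Qed.

Lemma xF_setU {A B : {set 'I_m}} : [disjoint A & B] -> xF (A :|: B) = xF A * xF B.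
Proof. by move=> dAB; rewrite /xF -bigU //; apply: eq_bigl => i; rewrite !inE. Qed.

Lemma xF0 : xF (set0 : {set 'I_m}) = 1.
Proof. by rewrite /xF big_set0. Qed.

Lemma mon_ef_mnm_of (e f : 'I_m) : mon_ef e f = mnm_of (~: [set e; f]).
Proof. by apply/mnmP => i; rewrite mnmE mnm_ofE !inE negb_or; case: (_ && _). Qed.

Lemma mcoeff_xFM (E S S' : {set 'I_m}) : S \subset E -> S' \subset E ->
  mcoeff (mnm_of E) (xF S * xF S') = (S' == E :\: S)%:R.
Proof.
move=> /subsetP sSE /subsetP sS'E.
rewrite !xF_mnm_of -mpolyXD mcoeffX; congr (nat_of_bool _)%:R.
apply/eqP/eqP => [/mnmP sum_eq | ->]; [apply/setP => i; have := sum_eq i | apply/mnmP => i];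
  rewrite ?mnmDE !mnm_ofE ?inE; have /implyP := sSE i; have /implyP := sS'E i;
  by case: (i \in S) (i \in S') (i \in E) => [] [] [] //=.
Qed.

End Monomials.

Section Mef.
Context {V : finType} {m : nat} (ends : 'I_m -> V * V).

Lemma TpolyE {A B : {set 'I_m}} : [disjoint A & B] ->
  Tpoly ends A B =
  \sum_(S : {set 'I_m} | S \subset ~: (A :|: B))
    (xF A * xF S)%:P * 'X^(kcomp ends (A :|: S)).
Proof.
move=> dAB; rewrite /Tpoly (big_setU_interval _ _ dAB); apply: eq_bigr => S sS.
suff dAS : [disjoint A & S] by rewrite (xF_setU dAS).
by rewrite disjoint_sym disjoints_subset (subset_trans sS) // setCS subsetUl.
Qed.

Variables (e f : 'I_m).
Hypothesis e_neq_f : e != f.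
Local Notation Eef := (~: [set e; f]).

Definition Mef : {poly {mpoly int[m]}} :=
  \sum_(S : {set 'I_m} | S \subset Eef) \sum_(S' : {set 'I_m} | S' \subset Eef)
    (xF S * xF S')%:P *
    (qint (kcomp ends ([set e; f] :|: S) + kcomp ends S')
     - qint (kcomp ends ([set e] :|: S) + kcomp ends ([set f] :|: S'))).

Lemma Mef_spec : is_Mef ends e f Mef.
Proof.
have d_ef : [disjoint [set e] & [set f]] by rewrite disjoints1 in_set1.
have d_fe : [disjoint [set f] & [set e]] by rewrite disjoint_sym.
have d_ef0 : [disjoint [set e; f] & set0] by rewrite disjoints_subset setC0 subsetT.
have d_0ef : [disjoint set0 & [set e; f]] by rewrite disjoint_sym.
rewrite /is_Mef (TpolyE d_ef) (TpolyE d_fe) (TpolyE d_ef0) (TpolyE d_0ef).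
rewrite [[set f] :|: _]setUC setU0 set0U !big_distrlr -sumrB mulr_sumr.
apply: eq_bigr => S _; rewrite -sumrB mulr_sumr; apply: eq_bigr => S' _.
rewrite set0U xF0 mul1r (xF_setU d_ef) -mulrA [(1 - 'X) * _]mulrCA mul_1subX_qintB.
rewrite /= !exprD !polyCM.
(* ring is much faster once the atoms are abstracted *)
move: (xF [set e])%:P (xF [set f])%:P (xF S)%:P (xF S')%:P => xe xf xS xS'.
move: 'X^(kcomp ends ([set e] :|: S)) 'X^(kcomp ends ([set f] :|: S')) => qeS qfS'.
move: 'X^(kcomp ends ([set e; f] :|: S)) 'X^(kcomp ends S') => qefS qS'.
ring.
Qed.

Lemma Mef_unique M : is_Mef ends e f M -> M = Mef.
Proof.
have xX_neq0 : (xF [set e; f])%:P * (1 - 'X) != 0 :> {poly {mpoly int[m]}}.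
  by rewrite mulf_neq0 ?polyC_eq0 ?xF_neq0 // -oppr_eq0 opprB -polyC1 polyXsubC_eq0.
by move=> M_spec; apply: (mulfI xX_neq0); rewrite M_spec Mef_spec.
Qed.

Lemma mcoeff_Mef1 :
  mcoeff (mon_ef e f) Mef.[1] =
  \sum_(S : {set 'I_m} | S \subset Eef)
    ((kcomp ends ([set e; f] :|: S) + kcomp ends (Eef :\: S))%:R
     - (kcomp ends ([set e] :|: S) + kcomp ends ([set f] :|: (Eef :\: S)))%:R).
Proof.
rewrite horner_sum raddf_sum; apply: eq_bigr => S sS.
rewrite horner_sum raddf_sum (bigD1 (Eef :\: S)) ?subsetDl //= big1 ?addr0
  => [|S' /andP[sS' S'_neq]]; rewrite hornerCM hornerD hornerN !horner_qint1 mulrBr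
  !mulr_natr mcoeffB !mcoeffMn mon_ef_mnm_of mcoeff_xFM ?subsetDl ?eqxx //.
by rewrite (negbTE S'_neq) !mul0rn subrr.
Qed.

Lemma card_paracel :
  #|[set F | paracel ends e f F]| =
  (\sum_(S : {set 'I_m} | S \subset Eef) paracel ends e f S)%N.
Proof.
rewrite -sum1_card big_mkcond [RHS]big_mkcond; apply: eq_bigr => F _; rewrite inE.
by case: (boolP (paracel ends e f F)) => [/and3P[-> _ _] | _] //; case: ifP.
Qed.

Lemma mcoeff_Mef1_paracel :
  mcoeff (mon_ef e f) Mef.[1] = #|[set F | paracel ends e f F]|%:R.
Proof.
rewrite mcoeff_Mef1 card_paracel natr_sum.
pose g1 S : int := (kcomp ends ([set e; f] :|: S))%:R - (kcomp ends ([set e] :|: S))%:R.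
pose g2 S : int := (kcomp ends S)%:R - (kcomp ends ([set f] :|: S))%:R.
rewrite (eq_bigr (fun S => g1 S + g2 (Eef :\: S))) => [|S _]; last first.
  by rewrite /g1 /g2 !natrD opprD addrACA.
rewrite big_split /= big_subset_setD -big_split /=.
apply: eq_bigr => S sS; rewrite /g1 /g2.
move/(congr1 (fun n => n%:R : int)): (kcomp_paracel ends sS); rewrite !natrD.
lia.
Qed.
End Mef.

Theorem proposition4p3 (V : finType) (m : nat) (ends : 'I_m -> V * V)
  (e f : 'I_m) (hef : e != f) :
  (exists M : {poly {mpoly int[m]}}, is_Mef ends e f M) /\
  (forall M : {poly {mpoly int[m]}}, is_Mef ends e f M ->
     mcoeff (mon_ef e f) M.[1] = (#|[set F : {set 'I_m} | paracel ends e f F]|)%:R).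
Proof.
split; first by exists (Mef ends e f); apply: Mef_spec.
by move=> M /(Mef_unique ends e f hef) ->; apply: mcoeff_Mef1_paracel.
Qed.
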